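(* Let $n\ge 1$ and let $P$ be the $n\times n$ matrix with entries $P_{ij}=\frac{1}{i}$ if $j\ge n-i+1$ and $P_{ij}=0$ otherwise (so row $i$ has the value $1/i$ in its last $i$ positions and zeros elsewhere). Then the eigenvalues of $P$ are exactly $\lambda_i(P)=\frac{(-1)^{i+1}}{i}$ for $i=1,\ldots,n$.
   Context: $P$ is a row-stochastic ''anti-lower-triangular'' matrix: the first row is $(0,\dots,0,1)$, the second is $(0,\dots,0,\tfrac12,\tfrac12)$, ..., the last row is $(\tfrac1n,\dots,\tfrac1n)$. *)

From mathcomp Require Import all_boot all_order all_algebra.
Set Implicit Arguments. Unset Strict Implicit. Unset Printing Implicit Defensive.
Import GRing.Theory Num.Theory.
Local Open Scope ring_scope.

(* The n x n "anti-lower-triangular" row-stochastic matrix P.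
   0-based indices: with i' = i+1, j' = j+1 (1-based), P_{i'j'} = 1/i'
   iff j' >= n - i' + 1, i.e. (n <= i + j + 1)%N. *)
Definition antiP (R : numFieldType) (n : nat) : 'M[R]_n :=
  \matrix_(i < n, j < n) (if (n <= i + j + 1)%N then (i.+1%:R)^-1 else 0).

(* Write P = A J, where A averages the first i+1 entries of a vector (row i)
   and J reverses the order of the coordinates. Conjugating by the Pascal
   matrix B = ('C(i, j)) triangularises both factors: by the hockey-stick
   identity A B = B D with D = diag(1/(d+1)), and since reversing k |-> N - k
   maps polynomials of degree d in k to polynomials of degree d, J B = B C with
   C upper triangular of diagonal (-1)^d. Hence P is similar to the triangular
   matrix D C, whose diagonal is (-1)^d/(d+1). *)

From mathcomp Require Import all_boot all_order all_algebra.
From mathcomp Require Import zify.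

Set Implicit Arguments.
Unset Strict Implicit.
Unset Printing Implicit Defensive.
Import GRing.Theory Num.Theory.
Local Open Scope ring_scope.

Lemma char_poly_trmx (R : comNzRingType) n (A : 'M[R]_n) :
  char_poly A^T = char_poly A.
Proof.
rewrite /char_poly -det_tr; congr (\det _); apply/matrixP => i j.
by rewrite !mxE eq_sym.
Qed.

Lemma char_poly_conj (R : idomainType) n (A U B : 'M[R]_n) :
  \det B != 0 -> A *m B = B *m U -> char_poly A = char_poly U.
Proof.
move=> detB_neq0 AB_BU.
have : char_poly_mx A *m map_mx polyC B = map_mx polyC B *m char_poly_mx U.
  by rewrite /char_poly_mx mulmxBl mulmxBr -!map_mxM AB_BU scalar_mxC.
move/(congr1 determinant); rewrite !det_mulmx det_map_mx mulrC.
by apply: mulfI; rewrite polyC_eq0.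
Qed.

Lemma sum_binomial_col i d : (\sum_(k < i.+1) 'C(k, d) = 'C(i.+1, d.+1))%N.
Proof.
elim: i => [|i IHi]; first by rewrite big_ord1; case: d.
by rewrite big_ord_recr /= IHi [in RHS]binS.
Qed.

(* The coordinates of the polynomial x |-> 'C(N - x, d) in the binomial basis
   ('C(x, j))_j. *)
Definition rev_coef (R : nzRingType) (N d j : nat) : R :=
  if (j <= d)%N then (-1) ^+ j * ('C(N - j, d - j))%:R else 0.

Lemma sum_binomial_rev_coef (R : nzRingType) M N d k :
  (k < M)%N -> (k <= N)%N ->
  \sum_(j < M) ('C(k, j))%:R * rev_coef R N d j = ('C(N - k, d))%:R.
Proof.
elim: k M N d => [|k IHk] [|M] // N d lt_kM le_kN.
  rewrite big_ord_recl bin0 mul1r big1 ?addr0 => [|j _]; last first.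
    by rewrite bin_small ?mul0r.
  by rewrite /rev_coef expr0 mul1r !subn0.
case: N le_kN => // N le_kN.
rewrite big_ord_recl bin0 mul1r.
under eq_bigr => j _ do rewrite lift0 binS natrD mulrDl.
rewrite big_split /= addrA.
have -> : rev_coef R N.+1 d 0
    + \sum_(j < M) ('C(k, j.+1))%:R * rev_coef R N.+1 d j.+1
    = \sum_(j < M.+1) ('C(k, j))%:R * rev_coef R N.+1 d j.
  by rewrite big_ord_recl bin0 mul1r.
rewrite IHk ?subSS; [|lia|lia].
case: d => [|d].
  by rewrite big1 ?addr0 ?bin0 // => j _; rewrite /rev_coef mulr0.
have rev_coefS (j : 'I_M) :
    rev_coef R N.+1 d.+1 j.+1 = - rev_coef R N d j.
  rewrite /rev_coef ltnS !subSS; case: ifP => _; last by rewrite oppr0.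
  by rewrite exprS mulN1r mulNr.
under eq_bigr => j _ do rewrite rev_coefS mulrN.
rewrite sumrN IHk ?subSn ?binS ?natrD ?addrK //; lia.
Qed.

Section AntiTriangular.
Variables (R : numFieldType) (n : nat).

Definition pascal_mx : 'M[R]_n := \matrix_(i, j) ('C(i, j))%:R.

Definition cesaro_mx : 'M[R]_n :=
  \matrix_(i, k) (if (k <= i)%N then (i.+1%:R)^-1 else 0).

Definition rev_mx : 'M[R]_n := \matrix_(i, j) (j == rev_ord i)%:R.

Definition rev_coef_mx : 'M[R]_n := \matrix_(j, d) rev_coef R n.-1 d j.

Lemma mul_rev_mx (M : 'M[R]_n) : rev_mx *m M = \matrix_(i, j) M (rev_ord i) j.
Proof.
apply/matrixP => i j; rewrite !mxE.
under eq_bigr => k _ do rewrite mxE mulr_natl mulrb.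
by rewrite -big_mkcond big_pred1_eq.
Qed.

Lemma mulmx_rev (M : 'M[R]_n) : M *m rev_mx = \matrix_(i, j) M i (rev_ord j).
Proof.
apply/matrixP => i j; rewrite !mxE.
under eq_bigr => k _ do rewrite mxE mulr_natr mulrb eq_sym (canF_eq rev_ordK).
by rewrite -big_mkcond big_pred1_eq.
Qed.

Lemma antiP_cesaro_rev : antiP R n = cesaro_mx *m rev_mx.
Proof.
rewrite mulmx_rev; apply/matrixP => i j; rewrite !mxE /=.
by have := ltn_ord j; case: ifP; case: ifP => //; lia.
Qed.

Lemma det_pascal_mx : \det pascal_mx = 1.
Proof.
rewrite det_trig; last by apply/is_trig_mxP => i j lt_ij; rewrite mxE bin_small.
by rewrite big1 // => i _; rewrite mxE binn.
Qed.

Lemma cesaro_pascal :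
  cesaro_mx *m pascal_mx = pascal_mx *m diag_mx (\row_d (d.+1%:R)^-1).
Proof.
apply/matrixP => i d; rewrite mul_mx_diag !mxE.
under eq_bigr => k _ do rewrite !mxE (fun_if (fun x => x * _)) mul0r.
rewrite -big_mkcond /=.
rewrite -(big_ord_widen n (fun k => (i.+1%:R)^-1 * ('C(k, d))%:R) (ltn_ord i)).
rewrite -mulr_sumr -natr_sum sum_binomial_col.
have := congr1 (fun m => m%:R : R) (mul_bin_diag i.+1 d); rewrite /= !natrM.
have [i1_neq0 d1_neq0] : i.+1%:R != 0 :> R /\ d.+1%:R != 0 :> R.
  by rewrite !pnatr_eq0.
move=> bin_diag; apply: (mulfI i1_neq0).
by rewrite mulVKf // mulrA bin_diag [d.+1%:R * _]mulrC mulfK.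
Qed.

Lemma rev_pascal : rev_mx *m pascal_mx = pascal_mx *m rev_coef_mx.
Proof.
rewrite mul_rev_mx; apply/matrixP => i d; rewrite !mxE /=.
have le_i_pn : (i <= n.-1)%N by have := ltn_ord i; lia.
have -> : (n - i.+1 = n.-1 - i)%N by lia.
rewrite -(sum_binomial_rev_coef R d (ltn_ord i) le_i_pn).
by apply: eq_bigr => j _; rewrite !mxE.
Qed.

End AntiTriangular.

Theorem proposition1 (R : numFieldType) (n : nat) (hn : (0 < n)%N) :
  char_poly (antiP R n) =
  \prod_(k < n) ('X - ((-1) ^+ k / (k.+1)%:R)%:P).
Proof.
set D := diag_mx (\row_d (d.+1%:R)^-1 : 'rV[R]_n).
have conj_antiP :
    antiP R n *m pascal_mx R n = pascal_mx R n *m (D *m rev_coef_mx R n).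
  by rewrite antiP_cesaro_rev -mulmxA rev_pascal mulmxA cesaro_pascal mulmxA.
rewrite (char_poly_conj _ conj_antiP) ?det_pascal_mx ?oner_neq0 //.
rewrite -char_poly_trmx char_poly_trig; last first.
  apply/is_trig_mxP => i j lt_ij.
  by rewrite mxE mul_diag_mx !mxE /rev_coef leqNgt lt_ij mulr0.
apply: eq_bigr => k _; rewrite mxE mul_diag_mx !mxE /rev_coef leqnn subnn bin0.
by rewrite mulr1 mulrC.
Qed.
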